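(* Let $R$ be a commutative Artinian ring, $M$ a non-zero $R$-module, $N$ and $L$ incomparable PS-hollow submodules of $M$, and $H\subseteq Ass^h(M)$. Then $N+L$ is $H$-PS-hollow if and only if $N$ and $L$ are both $H$-PS-hollow.
   Context: An $R$-submodule $N\leq M$ is PS-hollow iff for every ideal $I\leq R$ and every submodule $L\leq M$: $N\subseteq IM+L$ implies $N\subseteq IM$ or $N\subseteq L$. For a PS-hollow $N\leq M$ put $A_N=\{I\leq R: N\subseteq IM\}$ and let $H_N$ be the set of minimal elements of $A_N$ w.r.t. inclusion. For a set $H$ of ideals, $N$ is $H$-PS-hollow iff $N$ is PS-hollow and $H_N=H$. $Ass^h(M)$ (the associated hollow ideals of $M$) is the set of ideals $I$ with $I\in H_N$ for some PS-hollow submodule $N\leq M$. *)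

From HB Require Import structures.
From mathcomp Require Import all_boot all_order all_algebra.
From mathcomp Require Import boolp classical_sets.
Set Implicit Arguments. Unset Strict Implicit. Unset Printing Implicit Defensive.
Import GRing.Theory.
Local Open Scope classical_set_scope.
Local Open Scope ring_scope.

Definition is_ideal (R : comPzRingType) (I : set R) : Prop :=
  I 0 /\ (forall a b, I a -> I b -> I (a + b)) /\ (forall r a, I a -> I (r * a)).

Definition is_submodule (R : comPzRingType) (M : lmodType R) (N : set M) : Prop :=
  N 0 /\ (forall x y, N x -> N y -> N (x + y)) /\ (forall (r : R) x, N x -> N (r *: x)).

(* I M : the set of finite sums  sum_k i_k m_k  with i_k in I. *)
Definition idealmod (R : comPzRingType) (M : lmodType R) (I : set R) : set M :=
  [set x | exists s : seq (R * M),
      (forall p, p \in s -> I p.1) /\ x = \sum_(p <- s) p.1 *: p.2].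
Arguments idealmod {R} M I.

Definition sumset (R : comPzRingType) (M : lmodType R) (N L : set M) : set M :=
  [set x | exists n l, N n /\ L l /\ x = n + l].

Definition PS_hollow (R : comPzRingType) (M : lmodType R) (N : set M) : Prop :=
  is_submodule N /\
  forall (I : set R) (L : set M), is_ideal I -> is_submodule L ->
    N `<=` sumset (idealmod M I) L -> N `<=` idealmod M I \/ N `<=` L.

Definition A_set (R : comPzRingType) (M : lmodType R) (N : set M) : set (set R) :=
  [set I | is_ideal I /\ N `<=` idealmod M I].
Arguments A_set {R} M N.

Definition H_set (R : comPzRingType) (M : lmodType R) (N : set M) : set (set R) :=
  [set I | A_set M N I /\ forall J, A_set M N J -> J `<=` I -> J = I].
Arguments H_set {R} M N.

Definition H_PS_hollow (R : comPzRingType) (M : lmodType R) (H : set (set R))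
    (N : set M) : Prop :=
  PS_hollow N /\ H_set M N = H.

Definition Ass_h (R : comPzRingType) (M : lmodType R) : set (set R) :=
  [set I | exists N : set M, PS_hollow N /\ H_set M N I].
Arguments Ass_h {R} M.

Definition artinian_ring (R : comPzRingType) : Prop :=
  forall I : nat -> set R, (forall n, is_ideal (I n)) ->
    (forall n, I n.+1 `<=` I n) ->
    exists n0, forall n, (n0 <= n)%N -> I n = I n0.

(* If N + L is PS-hollow and N is not contained in L, then N ⊆ IM gives
   N + L ⊆ IM + L, hence N + L ⊆ IM; so A_(N+L) = A_N, and likewise
   A_(N+L) = A_L. Conversely, over an Artinian ring every ideal of A_N contains
   a minimal one, so H_N = H_L forces A_N = A_L; with equal A-sets a case
   analysis shows that N + L is PS-hollow, and then A_(N+L) = A_N as before. *)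
From HB Require Import structures.
From mathcomp Require Import all_boot all_order all_algebra.
From mathcomp Require Import boolp classical_sets.
Local Open Scope classical_set_scope.
Local Open Scope ring_scope.
Import GRing.Theory.

Set Implicit Arguments.
Unset Strict Implicit.
Unset Printing Implicit Defensive.

Section Submodules.
Variables (R : comPzRingType) (M : lmodType R).

Lemma idealmodS (I J : set R) : J `<=` I -> idealmod M J `<=` idealmod M I.
Proof. by move=> JI x [s [Js ->]]; exists s; split=> // p /Js /JI. Qed.

Lemma is_submodule_idealmod (I : set R) :
  is_ideal I -> is_submodule (idealmod M I).
Proof.
move=> [_ [_ IM]]; split; first by exists [::]; rewrite big_nil.
split.
  move=> _ _ [s [Is ->]] [t [It ->]]; exists (s ++ t); rewrite big_cat.
  by split=> // p; rewrite mem_cat => /orP[/Is|/It].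
move=> r _ [s [Is ->]]; exists [seq (r * p.1, p.2) | p <- s]; split.
  by move=> _ /mapP[p /Is Ip ->]; apply: IM.
by rewrite big_map scaler_sumr; apply: eq_bigr => p _; rewrite scalerA.
Qed.

Lemma is_submodule_sumset (N L : set M) :
  is_submodule N -> is_submodule L -> is_submodule (sumset N L).
Proof.
move=> [N0 [ND NZ]] [L0 [LD LZ]]; split; first by exists 0, 0; rewrite addr0.
split.
  move=> _ _ [n [l [Nn [Ll ->]]]] [n' [l' [Nn' [Ll' ->]]]].
  by exists (n + n'), (l + l'); rewrite addrACA; auto.
move=> r _ [n [l [Nn [Ll ->]]]]; exists (r *: n), (r *: l).
by rewrite scalerDr; auto.
Qed.

Lemma sumsetC (N L : set M) : sumset N L = sumset L N.
Proof.
by apply/seteqP; split=> _ [n [l [Nn [Ll ->]]]]; exists l, n; rewrite addrC.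
Qed.

Lemma sumsetSl (N N' L : set M) : N `<=` N' -> sumset N L `<=` sumset N' L.
Proof. by move=> NN' _ [n [l [Nn [Ll ->]]]]; exists n, l; auto. Qed.

Lemma sumset_subl (N L : set M) : L 0 -> N `<=` sumset N L.
Proof. by move=> L0 n Nn; exists n, 0; rewrite addr0. Qed.

Lemma sumset_subr (N L : set M) : N 0 -> L `<=` sumset N L.
Proof. by move=> N0 l Ll; exists 0, l; rewrite add0r. Qed.

Lemma sumset_sub (N L K : set M) :
  is_submodule K -> N `<=` K -> L `<=` K -> sumset N L `<=` K.
Proof. by move=> [_ [KD _]] NK LK _ [n [l [Nn [Ll ->]]]]; apply: KD; auto. Qed.

End Submodules.

Section Hollow.
Variables (R : comPzRingType) (M : lmodType R).

Lemma A_set_sumsetl (N L : set M) : is_submodule L ->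
  PS_hollow (sumset N L) -> ~ N `<=` L -> A_set M (sumset N L) = A_set M N.
Proof.
move=> sL [_ hollowNL] nNL; apply/seteqP; split=> I [idI sub]; split=> //.
  exact: subset_trans (sumset_subl sL.1) sub.
have [//|NLL] := hollowNL I L idI sL (sumsetSl sub).
by case: nNL; apply: subset_trans (sumset_subl sL.1) NLL.
Qed.

Lemma H_set_sumsetl (N L : set M) : is_submodule L ->
  PS_hollow (sumset N L) -> ~ N `<=` L -> H_set M (sumset N L) = H_set M N.
Proof. by move=> sL hollowNL nNL; rewrite /H_set A_set_sumsetl. Qed.

Lemma PS_hollow_sumset (N L : set M) : PS_hollow N -> PS_hollow L ->
  A_set M N = A_set M L -> PS_hollow (sumset N L).
Proof.
move=> [sN hollowN] [sL hollowL] eqA.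
split=> [|I K idI sK sub]; first exact: is_submodule_sumset.
have sIM := is_submodule_idealmod M idI.
have /(hollowN I K idI sK)[NI|NK] := subset_trans (sumset_subl sL.1) sub;
have /(hollowL I K idI sK)[LI|LK] := subset_trans (sumset_subr sN.1) sub.
- by left; apply: sumset_sub.
- by left; apply: sumset_sub => //; have [] : A_set M L I by rewrite -eqA.
- by left; apply: sumset_sub => //; have [] : A_set M N I by rewrite eqA.
- by right; apply: sumset_sub.
Qed.

End Hollow.

Section Artinian.
Variable R : comPzRingType.
Hypothesis artR : artinian_ring R.

Lemma artinian_no_strict_descent (Q : set (set R)) :
  Q `<=` @is_ideal R -> (forall J, Q J -> exists2 J', Q J' & J' `<` J) ->
  Q = set0.
Proof.
move=> Qideal descent; apply/seteqP; split=> // I QI.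
have [f fP] : {f : set R -> set R & forall J, Q J -> Q (f J) /\ f J `<` J}.
  apply: (@choice _ _ (fun J J' => Q J -> Q J' /\ J' `<` J)) => J.
  have [QJ|nQJ] := pselect (Q J); last by exists J.
  by have [J' QJ' ltJ'] := descent J QJ; exists J'.
pose chain n := iter n f I.
have Qchain n : Q (chain n) by elim: n => //= n /fP[].
have [n0 stable] := artR (fun n => Qideal _ (Qchain n))
  (fun n => properW (fP _ (Qchain n)).2).
have fixed : f (chain n0) = chain n0 := stable n0.+1 (leqnSn n0).
by have := (fP _ (Qchain n0)).2; rewrite fixed => /properxx.
Qed.

Lemma artinian_minimal_sub (P : set (set R)) I : P `<=` @is_ideal R -> P I ->
  exists2 J, (P J /\ forall J', P J' -> J' `<=` J -> J' = J) & J `<=` I.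
Proof.
move=> Pideal PI; apply: contrapT => noMin.
pose Q := [set J | P J /\ J `<=` I].
have Q0 : Q = set0.
  apply: artinian_no_strict_descent => [J [/Pideal //]|J [PJ JI]].
  apply: contrapT => noLt; apply: noMin; exists J => //; split=> // J' PJ' J'J.
  apply: contrapT => neq; apply: noLt; exists J'.
    by split=> //; exact: subset_trans J'J JI.
  by split=> // JJ'; apply: neq; apply/seteqP.
by move/seteqP: Q0 => [/(_ I (conj PI (@subset_refl _ I)))].
Qed.

Lemma artinian_A_set_eq (M : lmodType R) (X Y : set M) :
  H_set M X = H_set M Y -> A_set M X = A_set M Y.
Proof.
suff sub X' Y' : H_set M X' = H_set M Y' -> A_set M X' `<=` A_set M Y'.
  by move=> eqH; apply/seteqP; split; apply: sub.
move=> eqH I AI.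
have [J HJ JI] := artinian_minimal_sub (fun J (AJ : A_set M X' J) => AJ.1) AI.
have [[_ YJ] _] : H_set M Y' J by rewrite -eqH.
by split; [exact: AI.1 | exact: subset_trans YJ (idealmodS JI)].
Qed.

End Artinian.

Theorem proposition5p5 (R : comPzRingType) (M : lmodType R)
    (N L : set M) (H : set (set R)) :
  artinian_ring R ->
  (exists m : M, m != 0) ->
  PS_hollow N -> PS_hollow L ->
  ~ (N `<=` L) -> ~ (L `<=` N) ->
  H `<=` Ass_h M ->
  (H_PS_hollow H (sumset N L) <-> (H_PS_hollow H N /\ H_PS_hollow H L)).
Proof.
move=> artR _ hollowN hollowL nNL nLN _; split.
  move=> [hollowNL <-]; split; split=> //.
    by rewrite (H_set_sumsetl hollowL.1 hollowNL nNL).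
  rewrite sumsetC in hollowNL *.
  by rewrite (H_set_sumsetl hollowN.1 hollowNL nLN).
move=> [[_ HN] [_ HL]].
have eqA : A_set M N = A_set M L.
  by apply: (artinian_A_set_eq artR); rewrite HN HL.
have hollowNL := PS_hollow_sumset hollowN hollowL eqA.
by split=> //; rewrite (H_set_sumsetl hollowL.1 hollowNL nNL).
Qed.
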